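(* Consider a run of the algorithm CTG (defined in the context), with $f(\emptyset)=0$, in which the events $\mathcal{E}_1,\mathcal{E}_2,\mathcal{E}_3$ (defined in the context) all hold. Then whenever an element $s$ is added to the solution set $S$ (with $S$ denoting the solution set just before the addition), $$\Delta f(S,s)\ge\frac{1-\alpha}{\kappa}\big(f(OPT)-f(S)\big)-2\epsilon.$$
   Context: Let $U$ be a finite ground set with $|U|=n$, and let $f:2^U\to\mathbb{R}_{\geq 0}$ be monotone and submodular. For $X\subseteq U$, $u\in U$, write $\Delta f(X,u)=f(X\cup\{u\})-f(X)$. Let $\kappa$ be a positive integer and let $OPT$ be an optimal solution of $\max\{f(X): X\subseteq U,|X|\le\kappa\}$. There is no value oracle for $f$; instead, for any $X\subseteq U$, $u\in U$, one can draw independent samples from a distribution $\mathcal{D}(X,u)$ with $\mathbb{E}[\mathcal{D}(X,u)]=\Delta f(X,u)$ and all samples lying in $[0,R]$; all samples drawn are independent. Logarithms are natural; $h(\alpha)=\log(\kappa/\alpha)/\alpha$. For a call of CS on $(S,u)$, regard its samples as initial terms of an infinite i.i.d. sequence from $\mathcal{D}(S,u)$ and let $\widehat{\Delta f_t}(S,u)$ be the average of the first $t$ terms. Procedure CS$(w,\epsilon,\delta,S,u)$: let $N_2=R^2\log(6nh(\alpha)/\delta)/(2\epsilon^2)$. For $t=1,2,\dots,N_2$: draw the $t$-th sample, update $\widehat{\Delta f_t}(S,u)$, set $C_t=R\sqrt{\log(12nh(\alpha)t^2/\delta)/(2t)}$; if $\widehat{\Delta f_t}(S,u)-C_t\ge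 w-\epsilon$ return true; else if $\widehat{\Delta f_t}(S,u)+C_t\le w+\epsilon$ return false. If the loop completes, return true iff $\widehat{\Delta f_{N_2}}(S,u)\ge w$. Algorithm CTG$(\epsilon,\delta,\alpha)$ with $\epsilon,\delta,\alpha\in(0,1)$: let $N_1=R^2\log(6n/\delta)/(2\epsilon^2)$. For each $s\in U$ let $\hat f(s)$ be the mean of $N_1$ samples from $\mathcal{D}(\emptyset,s)$, and let $d=\max_{s\in U}\hat f(s)$. Set $w\gets d$, $S\gets\emptyset$. While $w>\alpha d/\kappa$: for each $u\in U$ in turn, if $|S|<\kappa$, call CS$(w,\epsilon,\delta,S,u)$ and if it returns true set $S\gets S\cup\{u\}$; after the pass set $w\gets w(1-\alpha)$. Return $S$. Events: $\mathcal{E}_1$: $\max_{s\in U}f(\{s\})-\epsilon\le d\le\max_{s\in U}f(\{s\})+\epsilon$. $\mathcal{E}_2$: for every call of CS on a pair $(S,u)$ and every $t\in\mathbb{N}_+$, $|\widehat{\Delta f_t}(S,u)-\Delta f(S,u)|\le C_t$. $\mathcal{E}_3$: for every call of CS on a pair $(S,u)$, $|\widehat{\Delta f_{N_2}}(S,u)-\Delta f(S,u)|\le\epsilon$. *)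

From HB Require Import structures.
From mathcomp Require Import all_boot all_order all_algebra.
From mathcomp Require Import all_classical all_reals all_analysis.
Set Implicit Arguments. Unset Strict Implicit. Unset Printing Implicit Defensive.
Import Order.TTheory GRing.Theory Num.Theory.
Local Open Scope ring_scope.

(* Deterministic model of a run of CTG: all randomness is given by the sample
   values that were drawn.  [init s i] is the (i+1)-th sample from D(emptyset,s)
   used in the initial estimation; [smp k t] is the (t+1)-th term of the
   (infinite i.i.d.) sample sequence of the k-th call of CS made by the run
   (calls numbered 0,1,2,... in execution order). *)

Section CTG.
Variable R : realType.
Variable U : finType.

Definition Delta (f : {set U} -> R) (X : {set U}) (u : U) : R := f (u |: X) - f X.

Definition monotone_set (f : {set U} -> R) :=
  forall A B : {set U}, A \subset B -> f A <= f B.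
Definition submodular (f : {set U} -> R) :=
  forall A B : {set U}, f (A :|: B) + f (A :&: B) <= f A + f B.

(* smallest natural number >= x (0 if x <= 0) *)
Definition natceil (x : R) : nat := Num.truncn ((Num.ceil x)%:~R : R).

Definition avg (x : nat -> R) (t : nat) : R := (\sum_(i < t) x i) / t%:R.

Variables (kappa : nat) (eps delta alpha Rg : R).

Definition nU : R := #|U|%:R.
Definition h : R := ln (kappa%:R / alpha) / alpha.
Definition N1 : R := Rg ^+ 2 * ln (6 * nU / delta) / (2 * eps ^+ 2).
Definition N2 : R := Rg ^+ 2 * ln (6 * nU * h / delta) / (2 * eps ^+ 2).
Definition N1n : nat := natceil N1.
Definition N2n : nat := natceil N2.
Definition Ct (t : nat) : R :=
  Rg * Num.sqrt (ln (12 * nU * h * (t%:R) ^+ 2 / delta) / (2 * t%:R)).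

(* The procedure CS(w, eps, delta, S, u) run on the sample sequence x.
   [cs_iter k t] performs iterations t, t+1, ..., t+k-1 of the loop. *)
Fixpoint cs_iter (w : R) (x : nat -> R) (k t : nat) : bool :=
  match k with
  | 0 => w <= avg x N2n
  | k'.+1 =>
      if w - eps <= avg x t - Ct t then true
      else if avg x t + Ct t <= w + eps then false
      else cs_iter w x k' t.+1
  end.
Definition CS (w : R) (x : nat -> R) : bool := cs_iter w x N2n 1.

Variables (ord : seq U) (init : U -> nat -> R) (smp : nat -> nat -> R).

(* estimates of f({s}) and d *)
Definition fhat (s : U) : R := avg (init s) N1n.
Definition dd : R := \big[Num.max/0]_(s : U) fhat s.

Definition wj (j : nat) : R := dd * (1 - alpha) ^+ j.
(* pass j is executed iff the while-guard held before passes 0..j *)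
Definition executed (j : nat) : Prop :=
  forall i, (i <= j)%N -> alpha * dd / kappa%:R < wj i.

(* state: current solution and number of CS calls made so far *)
Record st := St { cur : {set U}; cnt : nat }.

Definition step (w : R) (s : st) (u : U) : st :=
  if (#|cur s| < kappa)%N then
    St (if CS w (smp (cnt s)) then u |: cur s else cur s) (cnt s).+1
  else s.

Definition run_pass (w : R) (s : st) : st := foldl (step w) s ord.

Fixpoint before_pass (j : nat) : st :=
  match j with
  | 0 => St (finset.set0 : {set U}) 0
  | j'.+1 => run_pass (wj j') (before_pass j')
  end.

(* [call k S u w]: during the run, the k-th call of CS is CS(w,eps,delta,S,u) *)
Definition call (k : nat) (S : {set U}) (u : U) (w : R) : Prop :=
  exists j pre post,
    [/\ executed j, ord = pre ++ u :: post, w = wj j &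
      [/\ S = cur (foldl (step w) (before_pass j) pre),
        k = cnt (foldl (step w) (before_pass j) pre) &
        (#|S| < kappa)%N]].

(* [added S u]: during the run, u is added to the solution set, whose value
   just before the addition is S *)
Definition added (S : {set U}) (u : U) : Prop :=
  exists k w, call k S u w /\ CS w (smp k).

Variable f : {set U} -> R.

Definition E1 : Prop :=
  let M := \big[Num.max/0]_(s : U) f [set s] in M - eps <= dd <= M + eps.
Definition E2 : Prop :=
  forall k S u w, call k S u w ->
    forall t : nat, (0 < t)%N -> `|avg (smp k) t - Delta f S u| <= Ct t.
Definition E3 : Prop :=
  forall k S u w, call k S u w -> `|avg (smp k) N2n - Delta f S u| <= eps.

End CTG.

(* When CTG adds s to S during the pass with threshold w, the sequential test
   certifies Delta f S s >= w - eps.  Every other element o has marginal gain at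
   most w / (1 - alpha) + eps: either o was rejected by the test in the previous
   pass, whose threshold is w / (1 - alpha), at a state contained in S, and
   submodularity lets the rejection bound pass to S; or w is the first threshold
   d, which exceeds every singleton value by at most eps.  Summing over OPT,
   f OPT - f S <= kappa (w / (1 - alpha) + eps), which rearranges to the claim. *)

From HB Require Import structures.
From mathcomp Require Import all_boot all_order all_algebra.
From mathcomp Require Import all_classical all_reals all_analysis.
From mathcomp Require Import fintype finset lra.
Import Order.TTheory GRing.Theory Num.Theory.
Local Open Scope ring_scope.

Section Marginals.
Context {R : realType} {U : finType} {f : {set U} -> R}.
Hypotheses (f_mono : monotone_set f) (f_sub : submodular f).

Lemma Delta_mem (X : {set U}) (o : U) : o \in X -> Delta f X o = 0.
Proof. by move=> oX; rewrite /Delta (setUidPr _) ?subrr ?sub1set. Qed.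

Lemma Delta_ge0 (X : {set U}) (o : U) : 0 <= Delta f X o.
Proof. by rewrite subr_ge0 f_mono // subsetUr. Qed.

Lemma Delta_antitone (o : U) {A B : {set U}} : A \subset B -> Delta f B o <= Delta f A o.
Proof.
move=> AB; have [oB | oB] := boolP (o \in B); first by rewrite Delta_mem ?Delta_ge0.
have := f_sub (o |: A) B.
rewrite -setUA (setUidPr AB) setIUl (setIidPl AB) disjoint_setI0 ?disjoints1 //.
by rewrite set0U /Delta; lra.
Qed.

Lemma gain_le_sum_Delta (S : {set U}) (l : seq U) :
  f (S :|: [set x in l]) - f S <= \sum_(o <- l) Delta f S o.
Proof.
elim: l => [|a l IHl]; first by rewrite big_nil (setUidPl (sub0set _)) subrr.
rewrite big_cons.
have -> : S :|: [set x in a :: l] = a |: (S :|: [set x in l]).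
  by apply/setP => x; rewrite !inE orbCA.
have := Delta_antitone a (subsetUl S [set x in l]).
rewrite /Delta in IHl * => Da; lra.
Qed.

Lemma gain_le_card_mul (S T : {set U}) (B : R) :
  (forall o, Delta f S o <= B) -> f (S :|: T) - f S <= #|T|%:R * B.
Proof.
move=> DB; have := gain_le_sum_Delta S (enum T).
rewrite set_enum => /le_trans; apply.
by rewrite big_enum mulr_natl -sumr_const; apply: ler_sum => o _.
Qed.

End Marginals.

Section SequentialTest.
Context {R : realType} {U : finType} {kappa : nat} {eps delta alpha Rg : R}.
Context {w D : R} {x : nat -> R}.
Hypothesis x_anytime : forall t, (0 < t)%N -> `|avg x t - D| <= Ct U kappa delta alpha Rg t.
Hypothesis x_final : `|avg x (N2n U kappa eps delta alpha Rg) - D| <= eps.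

Lemma cs_iter_sound (k : nat) {t : nat} : (0 < t)%N ->
  (cs_iter U kappa eps delta alpha Rg w x k t -> w - eps <= D) /\
  (~~ cs_iter U kappa eps delta alpha Rg w x k t -> D <= w + eps).
Proof.
elim: k t => [|k IHk] t t_gt0 /=.
  by move: x_final; rewrite ler_norml -ltNge => /andP[? ?]; split=> ?; lra.
move: (x_anytime _ t_gt0); rewrite ler_norml => /andP[? ?].
case: ifP => [? | _]; first by split=> // _; lra.
case: ifP => [? | _]; first by split=> // _; lra.
exact: IHk.
Qed.

Lemma CS_lower : CS U kappa eps delta alpha Rg w x -> w - eps <= D.
Proof. exact: (cs_iter_sound _ (ltn0Sn 0)).1. Qed.

Lemma CS_upper : ~~ CS U kappa eps delta alpha Rg w x -> D <= w + eps.
Proof. exact: (cs_iter_sound _ (ltn0Sn 0)).2. Qed.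

End SequentialTest.

Section Run.
Variables (R : realType) (U : finType) (f : {set U} -> R).
Variables (kappa : nat) (eps delta alpha Rg : R).
Variables (ord : seq U) (init : U -> nat -> R) (smp : nat -> nat -> R).

Local Notation step := (step kappa eps delta alpha Rg smp).
Local Notation before_pass := (before_pass kappa eps delta alpha Rg ord init smp).
Local Notation executed := (executed kappa eps delta alpha Rg init).
Local Notation call := (call kappa eps delta alpha Rg ord init smp).
Local Notation CS := (CS U kappa eps delta alpha Rg).
Local Notation dd := (dd eps delta Rg init).
Local Notation wj := (wj eps delta alpha Rg init).

Lemma cur_foldl_step_sub (w : R) (s : st U) (l : seq U) :
  cur s \subset cur (foldl (step w) s l).
Proof.
elim: l s => [|u l IHl] s /=; first exact: subxx.
apply: subset_trans (IHl _); rewrite /step.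
by case: ifP => //= _; case: ifP => //= _; exact: subsetUr.
Qed.

Lemma cur_step_prefix_sub (w : R) (s : st U) (pre post : seq U) (u : U) :
  cur (step w (foldl (step w) s pre) u) \subset cur (foldl (step w) s (pre ++ u :: post)).
Proof. by rewrite foldl_cat; apply: cur_foldl_step_sub. Qed.

Lemma dd_ge0 : 0 <= dd.
Proof. exact: bigmax_ge_id. Qed.

Hypotheses (alpha_ge0 : 0 <= alpha) (alpha_lt1 : alpha < 1) (eps_ge0 : 0 <= eps).

Lemma wj_ge0 (j : nat) : 0 <= wj j.
Proof. by rewrite mulr_ge0 ?dd_ge0 ?exprn_ge0 ?subr_ge0 ?ltW. Qed.

Lemma wjS (j : nat) : wj j.+1 = wj j * (1 - alpha).
Proof. by rewrite /wj exprSr mulrA. Qed.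

Hypotheses (f_mono : monotone_set f) (f_sub : submodular f).
Hypothesis ord_perm : perm_eq ord (enum U).
Hypotheses (E2h : E2 kappa eps delta alpha Rg ord init smp f)
  (E3h : E3 kappa eps delta alpha Rg ord init smp f).

(* An element missing after pass j was tested and rejected during it, unless the
   solution was already full, which the cardinality hypothesis excludes. *)
Lemma Delta_after_pass_le (j : nat) (o : U) :
  executed j -> (#|cur (before_pass j.+1)| < kappa)%N ->
  o \notin cur (before_pass j.+1) ->
  Delta f (cur (before_pass j.+1)) o <= wj j + eps.
Proof.
move=> ex_j full_lt o_out.
have [pre [post def_ord]] : exists pre post, ord = pre ++ o :: post.
  have : o \in ord by rewrite (perm_mem ord_perm) mem_enum.
  by case/splitPr => pre post; exists pre, post.
set s := foldl (step (wj j)) (before_pass j) pre.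
have step_sub : cur (step (wj j) s o) \subset cur (before_pass j.+1).
  by have := cur_step_prefix_sub (wj j) (before_pass j) pre post o; rewrite -def_ord.
have s_sub : cur s \subset cur (before_pass j.+1).
  exact: subset_trans (cur_foldl_step_sub _ s [:: o]) step_sub.
have s_lt : (#|cur s| < kappa)%N := leq_ltn_trans (subset_leq_card s_sub) full_lt.
have s_call : call (cnt s) (cur s) o (wj j) by exists j, pre, post.
have rejected : ~~ CS (wj j) (smp (cnt s)).
  apply: contra o_out => accepted; apply: (subsetP step_sub).
  by rewrite /step s_lt accepted setU11.
apply: le_trans (Delta_antitone f_mono f_sub o s_sub) _.
exact: CS_upper (E2h _ _ _ _ s_call) (E3h _ _ _ _ s_call) rejected.
Qed.

Hypotheses (f0 : f set0 = 0) (E1h : E1 eps delta Rg init f).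

Lemma Delta_le_dd (S : {set U}) (o : U) : Delta f S o <= dd + eps.
Proof.
apply: le_trans (Delta_antitone f_mono f_sub o (sub0set S)) _.
rewrite /Delta setU0 f0 subr0.
have := le_bigmax 0 (fun s => f [set s]) o.
by move: E1h; rewrite /E1 /= => /andP[? _]; lra.
Qed.

Lemma Delta_call_le (k : nat) (S : {set U}) (u : U) (w : R) (o : U) :
  call k S u w -> Delta f S o <= w / (1 - alpha) + eps.
Proof.
case=> j [pre [post [ex_j _ -> [S_eq _ S_lt]]]].
have bp_sub : cur (before_pass j) \subset S by rewrite S_eq cur_foldl_step_sub.
have [oS | oNS] := boolP (o \in S).
  by rewrite Delta_mem // addr_ge0 // divr_ge0 ?wj_ge0 // subr_ge0 ltW.
case: j ex_j S_eq bp_sub => [|j] ex_j _ bp_sub.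
  apply: le_trans (Delta_le_dd S o) _; rewrite lerD2r /wj expr0 mulr1.
  by rewrite ler_pdivlMr ?subr_gt0 // ler_piMr ?dd_ge0 // lerBlDr lerDl.
rewrite wjS mulfK ?subr_eq0 1?eq_sym ?lt_eqF //.
apply: le_trans (Delta_antitone f_mono f_sub o bp_sub) _.
apply: Delta_after_pass_le.
- by move=> i le_ij; apply: ex_j; apply: leqW.
- exact: leq_ltn_trans (subset_leq_card bp_sub) S_lt.
- by apply: contra oNS; apply: subsetP.
Qed.

End Run.

Theorem lemma5 (R : realType) (U : finType) (f : {set U} -> R)
  (kappa : nat) (eps delta alpha Rg : R) (OPT : {set U})
  (ord : seq U) (init : U -> nat -> R) (smp : nat -> nat -> R) :
  (forall X, 0 <= f X) -> monotone_set f -> submodular f -> f (finset.set0 : {set U}) = 0 ->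
  (0 < kappa)%N ->
  (#|OPT| <= kappa)%N -> (forall X : {set U}, (#|X| <= kappa)%N -> f X <= f OPT) ->
  0 < eps < 1 -> 0 < delta < 1 -> 0 < alpha < 1 -> 0 < Rg ->
  perm_eq ord (enum U) ->
  (forall s i, 0 <= init s i <= Rg) -> (forall k t, 0 <= smp k t <= Rg) ->
  E1 eps delta Rg init f ->
  E2 kappa eps delta alpha Rg ord init smp f ->
  E3 kappa eps delta alpha Rg ord init smp f ->
  forall (S : {set U}) (s : U),
    added kappa eps delta alpha Rg ord init smp S s ->
    Delta f S s >= (1 - alpha) / kappa%:R * (f OPT - f S) - 2 * eps.
Proof.
move=> _ f_mono f_sub f0 kappa_gt0 OPT_card _ /andP[eps_gt0 _] _ /andP[alpha_gt0 alpha_lt1] _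
  ord_perm _ _ E1h E2h E3h S s [k [w [s_call accepted]]].
have lower : w - eps <= Delta f S s.
  exact: CS_lower (E2h _ _ _ _ s_call) (E3h _ _ _ _ s_call) accepted.
pose B := w / (1 - alpha) + eps.
have upper o : Delta f S o <= B.
  by apply: Delta_call_le s_call => //; apply: ltW.
have gap : f OPT - f S <= kappa%:R * B.
  have B_ge0 : 0 <= B := le_trans (Delta_ge0 f_mono S s) (upper s).
  have := gain_le_card_mul f_mono f_sub S OPT B upper.
  have := f_mono _ _ (subsetUr S OPT).
  have : #|OPT|%:R * B <= kappa%:R * B by rewrite ler_wpM2r // ler_nat.
  lra.
have : (1 - alpha) / kappa%:R * (f OPT - f S) <= (1 - alpha) * B.
  by rewrite -mulrA ler_pM2l ?subr_gt0 // ler_pdivrMl ?ltr0n.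
have -> : (1 - alpha) * B = w + eps - alpha * eps.
  by rewrite mulrDr mulrC divfK ?subr_eq0 1?eq_sym ?lt_eqF // mulrBl mul1r addrA.
have : 0 <= alpha * eps by rewrite mulr_ge0 ?ltW.
lra.
Qed.
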